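(* Let $q$ be a prime power, $n\ge 6$ even, and $\mathcal{L}$ the Desarguesian $2$-spread of $\mathbb{F}_q^n$. Every $4$-dimensional subspace $U$ of $\mathbb{F}_q^n$ that contains exactly one element of $\mathcal{L}$ is adjacent in the Grassmann graph $J_q(n,4)$ to exactly $q+1$ four-dimensional subspaces containing $q^2+1$ elements of $\mathcal{L}$.
   Context: Identify $\mathbb{F}_q^n$ with $\mathbb{F}_{q^n}$, $n$ even, and let $F'=\mathbb{F}_{q^2}$ be its subfield of order $q^2$. The Desarguesian $2$-spread $\mathcal{L}$ is the set of $2$-dimensional $\mathbb{F}_q$-subspaces $F'x=\{\lambda x:\lambda\in F'\}$, $x\ne0$. The Grassmann graph $J_q(n,k)$ has as vertices the $k$-dimensional subspaces of $\mathbb{F}_q^n$, adjacent iff they meet in a $(k-1)$-dimensional subspace. *)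

From HB Require Import structures.
From mathcomp Require Import all_boot all_order all_algebra all_field.
Set Implicit Arguments. Unset Strict Implicit. Unset Printing Implicit Defensive.
Import GRing.Theory.
Local Open Scope ring_scope.
Local Open Scope vspace_scope.

(* F_q^n is modelled as a field extension L of the finite field F (|F| = q)
   with \dim {:L} = n, viewed as an F-vector space; F' is the subfield of L
   of dimension 2 over F (i.e. of order q^2). *)

Section Spread.
Variables (F : finFieldType) (L : fieldExtType F).

Definition spread_elt (F' : {subfield L}) (x : L) : {vspace L} := (F' * <[x]>)%VS.

Definition in_spread (F' : {subfield L}) (S : {vspace L}) : Prop :=
  exists2 x : L, (x != 0)%R & S = spread_elt F' x.

Definition count_exactly (P : {vspace L} -> Prop) (k : nat) : Prop :=
  exists s : seq {vspace L}, [/\ uniq s, size s = k & forall W, W \in s <-> P W].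

Definition contains_spread (F' : {subfield L}) (U : {vspace L}) (k : nat) : Prop :=
  count_exactly (fun S => in_spread F' S /\ (S <= U)%VS) k.

Definition grassmann_adj (k : nat) (U W : {vspace L}) : Prop :=
  [/\ \dim U = k, \dim W = k & \dim (U :&: W) = k.-1].
End Spread.

From HB Require Import structures.
From mathcomp Require Import all_boot all_order all_algebra all_field.
From mathcomp Require Import ring zify.
Set Implicit Arguments. Unset Strict Implicit. Unset Printing Implicit Defensive.
Import GRing.Theory.

(* Write sp x = F'x for the spread elements.  Distinct spread elements meet
   trivially, and a subspace W is "F'-stable" when F'W <= W; the spread
   elements inside an F'-stable W are exactly those through its vectors.
   1. If sp a <> sp b, then sp a + sp b is a 4-space (a projective line over
      F') whose spread elements are sp b and the sp (a + l b), l in F', all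
      distinct: q^2 + 1 of them.  Conversely a 4-space containing two spread
      elements is their sum, hence F'-stable.
   2. A subspace T of an F'-stable W with 2 dim T > dim W contains a spread
      element, because T meets alpha^-1 T nontrivially (F' = F + F alpha).
   3. Let U be a 4-space whose only spread element is S0 = sp x0.  For
      x in U \ S0 the space S0 + sp x is a neighbour of U with q^2 + 1 spread
      elements; by 1 and 2 every such neighbour W arises this way (U :&: W
      is a 3-subspace of the F'-stable W, so it contains S0 and some x).
      Writing U = S0 + <u1> + <u2>, these neighbours are indexed without
      repetition by the q + 1 points u1 + c u2 (c in F) and u2 of U / S0. *)

Section LinearAlgebra.
Variables (K : fieldType) (vT : vectType K).
Local Open Scope ring_scope.
Implicit Types (U V : {vspace vT}) (v : vT).

Lemma exists_notin U V : (\dim V < \dim U)%N -> exists2 u, u \in U & u \notin V.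
Proof. by move=> ltVU; apply/subvPn; apply: contraTN ltVU => /dimvS; rewrite -leqNgt. Qed.

Lemma dim_add_line U v : v \notin U -> \dim (U + <[v]>)%VS = (\dim U).+1.
Proof.
move=> vU; have nzv : v != 0 by apply: contraNneq vU => ->; rewrite mem0v.
rewrite dimv_disjoint_sum ?dim_vline ?nzv ?addn1 //.
apply/eqP; rewrite -subv0; apply/subvP => w /memv_capP[wU /vlineP[k wE]].
rewrite memv0 wE; have [-> | nzk] := eqVneq k 0; first by rewrite scale0r.
by case/negP: vU; rewrite -(scalerK nzk v) memvZ // -wE.
Qed.

End LinearAlgebra.

Section Spread.
Variables (F : finFieldType) (L : fieldExtType F) (F' : {subfield L}).
Local Open Scope ring_scope.
Implicit Types (a b x y : L) (S U W : {vspace L}).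

Notation sp x := (spread_elt F' x).

Lemma sp_memP y x : reflect (exists2 l, l \in F' & y = l * x) (y \in sp x).
Proof. exact: memv_cosetP. Qed.

Lemma sp_self x : x \in sp x.
Proof. by apply/sp_memP; exists 1; rewrite ?mul1r ?mem1v. Qed.

Lemma sp_dim x : x != 0 -> \dim (sp x) = \dim F'.
Proof. exact: dim_cosetv. Qed.

Definition Fstable W := forall l w, l \in F' -> w \in W -> l * w \in W.

Lemma sp_stable x : Fstable (sp x).
Proof.
move=> l w Fl /sp_memP[m Fm ->]; apply/sp_memP.
by exists (l * m); rewrite ?mulrA ?memvM.
Qed.

Lemma Fstable_add U W : Fstable U -> Fstable W -> Fstable (U + W)%VS.
Proof.
move=> stU stW l w Fl /memv_addP[u Uu [v Wv ->]].
by rewrite mulrDr memv_add ?stU ?stW.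
Qed.

Lemma sp_le x W : Fstable W -> x \in W -> (sp x <= W)%VS.
Proof.
move=> stW Wx; apply/prodvP=> l _ Fl /vlineP[k ->].
by rewrite -scalerAr memvZ // stW.
Qed.

Lemma sp_eq y x : y != 0 -> y \in sp x -> sp y = sp x.
Proof.
move=> nzy yx; have nzx : x != 0.
  by move: yx nzy => /sp_memP[l _ ->]; apply: contraNneq => ->; rewrite mulr0.
apply/eqP; rewrite eqEdim sp_dim // sp_dim // leqnn andbT.
exact: sp_le (@sp_stable x) yx.
Qed.

Lemma sp_cap x y : x != 0 -> y != 0 -> sp x != sp y -> (sp x :&: sp y = 0)%VS.
Proof.
move=> nzx nzy nxy; apply/eqP; rewrite -subv0; apply/subvP => z /memv_capP[zx zy].
rewrite memv0; apply: contraR nxy => nzz.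
by rewrite -(sp_eq nzz zx) -(sp_eq nzz zy).
Qed.

Lemma contains_spread_one U : contains_spread F' U 1 ->
  exists x0, [/\ x0 != 0, (sp x0 <= U)%VS &
                 forall y, y != 0 -> (sp y <= U)%VS -> sp y = sp x0].
Proof.
case=> s [us ss hs]; case: s us ss hs => [|S [|]] //= _ _ hs.
have [[x0 nzx0 eS] S0U] := (hs S).1 (mem_head _ _); subst S.
exists x0; split => // y nzy syU.
by have := (hs (sp y)).2 (conj (ex_intro2 _ _ y nzy erefl) syU); rewrite inE => /eqP.
Qed.

Lemma contains_spread_two W k : contains_spread F' W k -> (1 < k)%N ->
  exists a b, [/\ a != 0, b != 0, sp a != sp b, (sp a <= W)%VS & (sp b <= W)%VS].
Proof.
case=> s [us <- hs]; case: s us hs => [|A [|B r]] //= /andP[nAB _] hs _.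
rewrite inE negb_or in nAB; case/andP: nAB => nAB _.
have [[a nza eA] AW] := (hs A).1 (mem_head _ _).
have Bs : B \in [:: A, B & r] by rewrite !inE eqxx orbT.
have [[b nzb eB] BW] := (hs B).1 Bs.
by exists a, b; rewrite -eA -eB.
Qed.

Section SumOfTwo.
Variables a b : L.
Hypotheses (nza : a != 0) (nzb : b != 0) (nab : sp a != sp b).

Lemma sp_indep l m : l \in F' -> m \in F' -> l * a + m * b = 0 -> l = 0 /\ m = 0.
Proof.
move=> Fl Fm E; have la : l * a \in (sp a :&: sp b)%VS.
  rewrite memv_cap; apply/andP; split; first by apply/sp_memP; exists l.
  have -> : l * a = - (m * b) by apply/eqP; rewrite -subr_eq0 opprK E.
  by rewrite memvN; apply/sp_memP; exists m.
move: la; rewrite sp_cap // memv0 mulf_eq0 (negPf nza) orbF => /eqP l0.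
by move: E; rewrite l0 mul0r add0r => /eqP; rewrite mulf_eq0 (negPf nzb) orbF => /eqP.
Qed.

Lemma sum_point_nz l : l \in F' -> a + l * b != 0.
Proof.
move=> Fl; apply/eqP => E.
have [/eqP] : (1 : L) = 0 /\ l = 0 by apply: sp_indep; rewrite ?mem1v // mul1r.
by rewrite oner_eq0.
Qed.

Lemma sum_point_inj l m : l \in F' -> m \in F' ->
  sp (a + l * b) = sp (a + m * b) -> l = m.
Proof.
move=> Fl Fm E; have := sp_self (a + m * b); rewrite -E => /sp_memP[nu Fnu Enu].
have [/eqP nu1 /eqP] : 1 - nu = 0 /\ m - nu * l = 0.
  apply: sp_indep; rewrite ?rpredB ?memvM ?mem1v //.
  transitivity ((a + m * b) - nu * (a + l * b)); first ring.
  by rewrite Enu subrr.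
by rewrite subr_eq0 in nu1; rewrite -(eqP nu1) mul1r subr_eq0 => /eqP.
Qed.

Lemma sum_point_neq l : l \in F' -> sp (a + l * b) != sp b.
Proof.
move=> Fl; apply/eqP => E; have := sp_self (a + l * b); rewrite E => /sp_memP[nu Fnu Enu].
have [/eqP] : (1 : L) = 0 /\ l - nu = 0.
  apply: sp_indep; rewrite ?rpredB ?mem1v //.
  transitivity ((a + l * b) - nu * b); first ring.
  by rewrite Enu subrr.
by rewrite oner_eq0.
Qed.

Lemma sum_point_cover S : in_spread F' S -> (S <= sp a + sp b)%VS ->
  S = sp b \/ exists2 l, l \in F' & S = sp (a + l * b).
Proof.
case=> y nzy -> /subvP/(_ y (sp_self y)).
case/memv_addP=> _ /sp_memP[mu Fmu ->] [_ /sp_memP[nu Fnu ->] Ey].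
have [mu0 | nzmu] := eqVneq mu 0.
  left; apply: sp_eq nzy _; apply/sp_memP; exists nu => //.
  by rewrite Ey mu0 mul0r add0r.
right; exists (mu^-1 * nu); first by rewrite memvM ?memvV.
apply: sp_eq nzy _; apply/sp_memP; exists mu => //.
by rewrite Ey mulrDr -[mu^-1 * nu * b]mulrA mulVKf.
Qed.

End SumOfTwo.

Section DimTwo.
Hypothesis dimF' : \dim F' = 2%N.

Lemma dim_sp_sum a b : a != 0 -> b != 0 -> sp a != sp b -> \dim (sp a + sp b)%VS = 4%N.
Proof. by move=> nza nzb nab; rewrite dimv_disjoint_sum ?sp_cap // !sp_dim // dimF'. Qed.

(* F' is spanned over F by 1 and any alpha in F' \ F. *)
Lemma F'_generator : exists2 al, al \in F' & al \notin 1%VS.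
Proof. by apply/subvPn; apply/negP => /dimvS; rewrite dimF' dimv1. Qed.

Section Coordinates.
Variable al : L.
Hypotheses (Fal : al \in F') (al1 : al \notin 1%VS).

Definition F'_elt (p : F * F) : L := p.1%:A + p.2 *: al.

Lemma F'_elt_mem p : F'_elt p \in F'.
Proof. by rewrite memvD ?memvZ ?mem1v. Qed.

Lemma F'_elt_onto l : l \in F' -> exists p, l = F'_elt p.
Proof.
have -> : F' = (1%VS + <[al]>)%VS :> {vspace L}.
  apply/esym/eqP; rewrite eqEdim subv_add sub1v -memvE Fal /=.
  by rewrite dim_add_line // dimv1 dimF'.
by case/memv_addP=> _ /vlineP[s ->] [_ /vlineP[t ->] ->]; exists (s, t).
Qed.

Lemma F'_elt_inj : injective F'_elt.
Proof.
move=> [s t] [s' t'] E; rewrite /F'_elt /= in E.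
have E2 : (t' - t) *: al = (s - s')%:A.
  rewrite !scalerBl; apply/eqP; rewrite -subr_eq0; apply/eqP.
  transitivity (-(s%:A + t *: al - (s'%:A + t' *: al))); first ring.
  by rewrite E subrr oppr0.
have ett : t = t'.
  apply/eqP; apply: contraNT al1; rewrite eq_sym -subr_eq0 => nz.
  by rewrite -(scalerK nz al) E2 memvZ // memvZ // memv_line.
subst t'; move: E2; rewrite subrr scale0r => /esym/eqP.
by rewrite scaler_eq0 oner_eq0 orbF subr_eq0 => /eqP ->.
Qed.

End Coordinates.

Lemma spread_in_large_subspace W T : Fstable W -> (T <= W)%VS ->
  (\dim W < 2 * \dim T)%N -> exists2 v, v != 0 & (sp v <= T)%VS.
Proof.
move=> stW TW dimT; have [al Fal al1] := F'_generator.
have nzal : al != 0 by apply: contraNneq al1 => ->; rewrite mem0v.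
pose T' := (T * <[al^-1]>)%VS.
have T'W : (T' <= W)%VS.
  apply/prodvP => t _ Tt /vlineP[k ->].
  by rewrite -scalerAr memvZ // mulrC stW ?memvV // (subvP TW).
have [v /memv_capP[Tv /memv_cosetP[t Tt vE]]] :
    exists2 v, v \in (T :&: T')%VS & v \notin 0%VS.
  have : (T + T' <= W)%VS by rewrite subv_add TW T'W.
  move/dimvS; have := dimv_sum_cap T T'.
  rewrite /T' dim_cosetv ?invr_eq0 // => sum_cap le_sum.
  apply: exists_notin; rewrite dimv0 lt0n; apply: contraTneq dimT => cap0.
  by rewrite -leqNgt mul2n -addnn -sum_cap cap0 addn0.
rewrite memv0 => nzv; exists v => //.
have alv : al * v \in T by rewrite vE mulrCA divff // mulr1.
apply/prodvP => l _ Fl /vlineP[k ->].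
have [[s r] ->] := F'_elt_onto Fal al1 Fl.
by rewrite -scalerAr memvZ // mulrDl mulr_algl -scalerAl memvD ?memvZ.
Qed.

(* A 4-space containing two spread elements is their sum, so it is F'-stable. *)
Lemma Fstable_of_spread W k : \dim W = 4%N -> contains_spread F' W k -> (1 < k)%N ->
  Fstable W.
Proof.
move=> dimW /contains_spread_two h /h[a [b [nza nzb nab aW bW]]].
have -> : W = (sp a + sp b)%VS.
  by apply/esym/eqP; rewrite eqEdim subv_add aW bW dimW dim_sp_sum.
exact: Fstable_add (@sp_stable a) (@sp_stable b).
Qed.

Lemma sp_sum_count a b : a != 0 -> b != 0 -> sp a != sp b ->
  contains_spread F' (sp a + sp b)%VS (#|F| ^ 2 + 1)%N.
Proof.
move=> nza nzb nab; have [al Fal al1] := F'_generator.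
have stab : Fstable (sp a + sp b) := Fstable_add (@sp_stable a) (@sp_stable b).
have Fp p : F'_elt al p \in F' := F'_elt_mem Fal p.
exists ([seq sp (a + F'_elt al p * b) | p <- enum {: F * F}] ++ [:: sp b]); split.
- rewrite cat_uniq /= andbT orbF; apply/andP; split.
    rewrite map_inj_uniq ?enum_uniq // => p p' E.
    exact/(F'_elt_inj al1)/(sum_point_inj nza nzb nab (Fp p) (Fp p') E).
  by apply/mapP => -[p _ E]; move: (sum_point_neq nza nzb nab (Fp p)); rewrite -E eqxx.
- by rewrite size_cat size_map /= -cardE card_prod mulnn addn1.
move=> S; split.
  rewrite mem_cat inE => /orP[/mapP[p _ ->] | /eqP ->]; split.
  - by exists (a + F'_elt al p * b); rewrite ?sum_point_nz.
  - by apply: sp_le stab _; rewrite memv_add ?sp_self // sp_stable ?sp_self.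
  - by exists b.
  - by apply: sp_le stab _; rewrite (subvP (addvSr _ _)) ?sp_self.
case=> spS sub; rewrite mem_cat inE.
case: (sum_point_cover spS sub) => [-> | [l Fl ->]]; first by rewrite eqxx orbT.
have [p ->] := F'_elt_onto Fal al1 Fl.
by rewrite (map_f (fun p => sp (a + F'_elt al p * b))) ?mem_enum.
Qed.

Section Neighbours.
Variables (U : {vspace L}) (x0 : L).
Hypotheses (dimU : \dim U = 4%N) (nzx0 : x0 != 0) (S0U : (sp x0 <= U)%VS).
Hypothesis uniqS : forall y, y != 0 -> (sp y <= U)%VS -> sp y = sp x0.

Definition neighbour x := (sp x0 + sp x)%VS.

Lemma neighbour_stable x : Fstable (neighbour x).
Proof. exact: Fstable_add (@sp_stable x0) (@sp_stable x). Qed.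

Lemma neighbour_self x : x \in neighbour x.
Proof. by rewrite (subvP (addvSr _ _)) ?sp_self. Qed.

Lemma neighbour_base s x : s \in sp x0 -> s \in neighbour x.
Proof. exact: subvP (addvSl _ _) s. Qed.

Lemma neighbour_eq x y : x \in neighbour y -> y \in neighbour x ->
  neighbour x = neighbour y.
Proof.
have sub z w : z \in neighbour w -> (neighbour z <= neighbour w)%VS.
  by move=> zw; rewrite subv_add addvSl /=; apply: sp_le zw; apply: neighbour_stable.
by move=> xy yx; apply/eqP; rewrite eqEsubv !sub.
Qed.

Lemma neighbour_shift s k y : s \in sp x0 -> k != 0 -> neighbour (s + k *: y) = neighbour y.
Proof.
move=> Ss nzk; apply: neighbour_eq; first by rewrite memv_add ?memvZ ?sp_self.
have ky : k *: y \in neighbour (s + k *: y).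
  have := memvB (neighbour_self (s + k *: y)) (neighbour_base _ Ss).
  by rewrite [s + _]addrC addrK.
by move: (memvZ k^-1 ky); rewrite scalerK.
Qed.

Lemma neighbour_props x : x \in U -> x \notin sp x0 ->
  [/\ \dim (neighbour x) = 4%N, ~~ (U <= neighbour x)%VS
    & \dim (U :&: neighbour x) = 3%N].
Proof.
move=> xU xS; have nzx : x != 0 by apply: contraNneq xS => ->; rewrite mem0v.
have neq : sp x0 != sp x by apply: contraNneq xS => ->; rewrite sp_self.
have dimN := dim_sp_sum nzx0 nzx neq.
have nsub : ~~ (U <= neighbour x)%VS.
  apply/negP => sub; have eUN : U = neighbour x by apply/eqP; rewrite eqEdim sub dimU dimN.
  by move: neq; rewrite (uniqS nzx) ?eqxx // eUN addvSr.
split => //; have lo : (sp x0 + <[x]> <= U :&: neighbour x)%VS.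
  by rewrite subv_cap subv_add S0U -memvE xU addvS // -memvE sp_self.
have := dimvS lo; rewrite dim_add_line // sp_dim // dimF' => ge3.
have := dimvS (capvSl U (neighbour x)); rewrite dimU => le4.
have : \dim (U :&: neighbour x) != 4%N.
  apply: contra nsub => /eqP d4.
  have /eqP <- : (U :&: neighbour x == U)%VS by rewrite eqEdim capvSl d4 dimU.
  exact: capvSr.
lia.
Qed.

Lemma neighbour_spec x : x \in U -> x \notin sp x0 ->
  grassmann_adj 4 U (neighbour x) /\ contains_spread F' (neighbour x) (#|F| ^ 2 + 1)%N.
Proof.
move=> xU xS; have [dimN _ dimUN] := neighbour_props xU xS.
have nzx : x != 0 by apply: contraNneq xS => ->; rewrite mem0v.
have neq : sp x0 != sp x by apply: contraNneq xS => ->; rewrite sp_self.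
by split; [split | exact: sp_sum_count].
Qed.

Lemma neighbour_of W k : grassmann_adj 4 U W -> contains_spread F' W k -> (1 < k)%N ->
  exists w, [/\ w \in U, w \notin sp x0 & W = neighbour w].
Proof.
case=> _ dimW dimUW cW k_gt1; have stW := Fstable_of_spread dimW cW k_gt1.
have big : (\dim W < 2 * \dim (U :&: W))%N by rewrite dimW dimUW.
have [v nzv svT] := spread_in_large_subspace stW (capvSr U W) big.
have S0T : (sp x0 <= U :&: W)%VS by rewrite -(uniqS nzv) ?(subv_trans svT) ?capvSl.
have lt : (\dim (sp x0) < \dim (U :&: W))%N by rewrite sp_dim // dimF' dimUW.
have [w /memv_capP[wU wW] wS] := exists_notin lt.
exists w; split => //; have [dimN _ _] := neighbour_props wU wS.
apply/esym/eqP; rewrite eqEdim dimW dimN leqnn andbT subv_add (sp_le stW wW).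
by rewrite (subv_trans S0T (capvSr _ _)).
Qed.

Section ProjectiveLine.
Variables u1 u2 : L.
Hypotheses (u1U : u1 \in U) (u2U : u2 \in U).
Hypotheses (u1S : u1 \notin sp x0) (u2S : u2 \notin (sp x0 + <[u1]>)%VS).

Lemma U_span : (sp x0 + <[u1]> + <[u2]>)%VS = U.
Proof.
apply/eqP; rewrite eqEdim !subv_add S0U -!memvE u1U u2U /=.
by rewrite !dim_add_line // sp_dim // dimF' dimU.
Qed.

Definition point (c : option F) : L := if c is Some c then u1 + c *: u2 else u2.

Lemma point_in c : point c \in U.
Proof. by case: c => [c|] //=; rewrite memvD ?memvZ. Qed.

Lemma point_notin c : point c \notin sp x0.
Proof.
case: c => [c|] /=; last by apply: contra u2S; apply: subvP; apply: addvSl.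
apply/negP => hS; have [c0 | nzc] := eqVneq c 0.
  by move: hS; rewrite c0 scale0r addr0; apply/negP.
case/negP: u2S; have cu2 : c *: u2 \in (sp x0 + <[u1]>)%VS.
  have := memvB (subvP (addvSl _ <[u1]>) _ hS) (subvP (addvSr (sp x0) _) _ (memv_line u1)).
  by rewrite [u1 + _]addrC addrK.
by move: (memvZ c^-1 cu2); rewrite scalerK.
Qed.

Lemma points_span (V : {vspace L}) c d : c != d -> point c \in V -> point d \in V ->
  u1 \in V /\ u2 \in V.
Proof.
have key c' : u1 + c' *: u2 \in V -> u2 \in V -> u1 \in V /\ u2 \in V.
  by move=> h1 h2; split => //; move: (memvB h1 (memvZ c' h2)); rewrite addrK.
case: c d => [c|] [d|] //= ncd hc hd; [| exact: key hc hd | exact: key hd hc].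
have nz : c - d != 0 by rewrite subr_eq0; apply: contraNneq ncd => ->.
have h : (c - d) *: u2 \in V.
  have -> : (c - d) *: u2 = (u1 + c *: u2) - (u1 + d *: u2) by rewrite scalerBl; ring.
  exact: memvB.
by apply: key hc _; move: (memvZ (c - d)^-1 h); rewrite scalerK.
Qed.

Lemma neighbour_point_inj : injective (fun c => neighbour (point c)).
Proof.
move=> c d /= E; apply/eqP; apply: contraT => ncd.
have dN : point d \in neighbour (point c) by rewrite E neighbour_self.
have [h1 h2] := points_span ncd (neighbour_self (point c)) dN.
have [_ nsub _] := neighbour_props (point_in c) (point_notin c).
by move: nsub; rewrite -U_span !subv_add addvSl -!memvE h1 h2.
Qed.

Lemma point_cover w : w \in U -> w \notin sp x0 ->
  exists c, neighbour w = neighbour (point c).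
Proof.
rewrite -{1}U_span.
case/memv_addP=> _ /memv_addP[s Ss [_ /vlineP[k1 ->] ->]] [_ /vlineP[k2 ->] ->] wS.
have [k10 | nzk1] := eqVneq k1 0.
  have [k20 | nzk2] := eqVneq k2 0; first by rewrite k10 k20 !scale0r !addr0 Ss in wS.
  by exists None; rewrite k10 scale0r addr0 neighbour_shift.
exists (Some (k2 / k1)); rewrite /= -(neighbour_shift (u1 + (k2 / k1) *: u2) Ss nzk1).
by rewrite scalerDr scalerA mulrC divfK // addrA.
Qed.

Lemma neighbours_count :
  count_exactly (fun W => grassmann_adj 4 U W /\ contains_spread F' W (#|F| ^ 2 + 1)%N)
    (#|F|).+1.
Proof.
exists [seq neighbour (point c) | c <- enum {: option F}]; split.
- by rewrite map_inj_uniq ?enum_uniq //; apply: neighbour_point_inj.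
- by rewrite size_map -cardE card_option.
move=> W; split.
  by case/mapP=> c _ ->; apply: neighbour_spec (point_in c) (point_notin c).
case=> adj cW; have q_gt0 : (0 < #|F|)%N by apply/card_gt0P; exists 0.
have k_gt1 : (1 < #|F| ^ 2 + 1)%N by rewrite addn1 ltnS expn_gt0 q_gt0.
have [w [wU wS ->]] := neighbour_of adj cW k_gt1.
by have [c ->] := point_cover wU wS; apply: map_f; rewrite mem_enum.
Qed.

End ProjectiveLine.
End Neighbours.
End DimTwo.
End Spread.

Theorem lemma6p2 (F : finFieldType) (L : fieldExtType F) (F' : {subfield L})
    (q n : nat) :
  #|F| = q -> \dim {:L} = n -> ~~ odd n -> 6 <= n -> \dim F' = 2 ->
  forall U : {vspace L}, \dim U = 4 -> contains_spread F' U 1 ->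
  count_exactly
    (fun W : {vspace L} => grassmann_adj 4 U W /\ contains_spread F' W (q ^ 2 + 1))
    q.+1.
Proof.
move=> <- _ _ _ dimF' U dimU /contains_spread_one[x0 [nzx0 S0U uniqS]].
have dimS0 : \dim (spread_elt F' x0) = 2 by rewrite sp_dim.
have [u1 u1U u1S] : exists2 u1, u1 \in U & u1 \notin spread_elt F' x0.
  by apply: exists_notin; rewrite dimS0 dimU.
have [u2 u2U u2S] : exists2 u2, u2 \in U & u2 \notin (spread_elt F' x0 + <[u1]>)%VS.
  by apply: exists_notin; rewrite dim_add_line // dimS0 dimU.
by have := neighbours_count dimF' dimU nzx0 S0U uniqS u1U u2U u1S u2S.
Qed.
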